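(* Let $(T,d)$ be a real tree. Then: (1) $\mathcal S\subset\mathcal B_0\subset\mathcal G$ and $\overline{\mathcal S}\subset\mathcal G$; (2) if $T$ is separable, then $\mathcal B_0=\mathcal B$ and $\overline{\mathcal S}=\mathcal G$.
   Context: A real tree is a geodesic $0$-hyperbolic (in the sense of Gromov) metric space; $[x,y]$ denotes the unique arc (segment) joining $x$ and $y$. $\mathcal G$ is the $\sigma$-algebra of subsets $S\subset T$ such that $S\cap[x,y]$ is Lebesgue-measurable in $[x,y]$ (identified isometrically with a real interval) for all $x,y\in T$; on it, the length measure is $\lambda(S)=\sup_R\sum_{i=1}^k\mathrm{Leb}_{S_i}(S_i\cap S)$, the supremum over finite disjoint unions $R=\bigcup_{i=1}^kS_i$ of segments. $\mathcal S$ is the $\sigma$-algebra generated by segments; $\overline{\mathcal S}$ is its completion with respect to $\lambda$-negligible sets (i.e. by adding subsets of sets in $\mathcal S$ of $\lambda$-measure zero); $\mathcal B$ is the Borel $\sigma$-algebra (generated by open sets); $\mathcal B_0$ is the $\sigma$-algebra generated by open balls. *)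

From mathcomp Require Import all_boot all_order all_algebra.
From mathcomp Require Import all_classical all_reals all_analysis.
Set Implicit Arguments. Unset Strict Implicit. Unset Printing Implicit Defensive.
Import Order.TTheory GRing.Theory Num.Theory.
Local Open Scope classical_set_scope.
Local Open Scope ring_scope.

Section RealTrees.
Variables (R : realType) (T : Type) (d : T -> T -> R).

Definition is_metric : Prop :=
  [/\ forall x y, 0 <= d x y,
      forall x y, d x y = 0 <-> x = y,
      forall x y, d x y = d y x &
      forall x y z, d x z <= d x y + d y z].

Definition geodesic (x y : T) (gamma : R -> T) : Prop :=
  [/\ gamma 0 = x, gamma (d x y) = y &
      forall s t, 0 <= s <= d x y -> 0 <= t <= d x y ->
        d (gamma s) (gamma t) = `|s - t|].

Definition geodesic_space : Prop :=
  forall x y, exists gamma, geodesic x y gamma.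

Definition gromov_product (w x y : T) : R := (d w x + d w y - d x y) / 2.

Definition zero_hyperbolic : Prop :=
  forall w x y z,
    Num.min (gromov_product w x z) (gromov_product w y z) <= gromov_product w x y.

Definition real_tree : Prop := [/\ is_metric, geodesic_space & zero_hyperbolic].

(* the segment [x,y]: the image of the (unique in a real tree) geodesic *)
Definition segment (x y : T) : set T :=
  [set z | exists gamma, geodesic x y gamma /\
                         exists t, 0 <= t <= d x y /\ gamma t = z].

(* image of S `&` [x,y] under the isometric identification z |-> d x z
   of [x,y] with the real interval [0, d x y] *)
Definition seg_coord (x y : T) (S : set T) : set R :=
  [set t | exists z, segment x y z /\ S z /\ d x z = t].

(* Lebesgue measurable subsets of R (completed Lebesgue sigma-algebra) *)
Definition lebesgue_measurable (A : set R) : Prop :=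
  @measurable _ (caratheodory_type (R:=R) (@wlength R idfun)^*%mu) A.

Definition sigmaG : set (set T) :=
  [set S | forall x y, lebesgue_measurable (seg_coord x y S)].

Definition seg_leb (x y : T) (S : set T) : \bar R :=
  completed_lebesgue_measure (seg_coord x y S).

Definition length_measure (S : set T) : \bar R :=
  ereal_sup [set v | exists (n : nat) (a b : nat -> T),
     (forall i j, (i < j < n)%N -> segment (a i) (b i) `&` segment (a j) (b j) = set0)
     /\ v = (\sum_(i < n) seg_leb (a i) (b i) S)%E].

Definition sigmaS : set (set T) := <<s [set segment x y | x in setT & y in setT] >>.

Definition sigmaS_completion : set (set T) :=
  <<s sigmaS `|` [set N | exists M, sigmaS M /\ length_measure M = 0%E /\ N `<=` M] >>.

Definition open_ball (x : T) (r : R) : set T := [set y | d x y < r].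

Definition metric_open (A : set T) : Prop :=
  forall x, A x -> exists2 r, 0 < r & open_ball x r `<=` A.

Definition sigmaB : set (set T) := <<s [set A | metric_open A] >>.

Definition sigmaB0 : set (set T) :=
  <<s [set B | exists x r, 0 < r /\ B = open_ball x r] >>.

Definition separable : Prop :=
  exists D : set T, countable D /\
    forall x e, 0 < e -> exists2 y, D y & d x y < e.

End RealTrees.

(* Along a segment [x,y], parametrised by arc length t, the distance to a
   point w is d x w - t up to the branch point t = (w|y)_x and
   d y w - (d x y - t) after it.  Hence the trace of a ball on a segment is an
   interval, so balls are in G; a segment is closed, hence the intersection over
   n of the unions of the balls of radius 1/(n+1) centred on a 1/(n+1)-grid of
   it, so segments are in B0; and Leb_[x,y] <= lambda puts lambda-null sets in G.
   If D is countable and dense, balls centred in D with radii 1/(n+1) generate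
   the open sets.  Fix x0 and let U be the union of the segments [x0,y], y in D.
   A point outside U lies on a segment only as one of its endpoints, so the
   complement of U is lambda-null; and for A in G, A meets [x0,y] in the image
   of a Borel set (a set of S) plus the image of a Lebesgue-null set, which is
   lambda-null because the arc length along another segment is a piecewise
   translation or reflection of t. *)

From mathcomp Require Import all_boot all_order all_algebra.
From mathcomp Require Import all_classical all_reals all_analysis.
From mathcomp Require Import measurable_realfun lra.
Set Implicit Arguments. Unset Strict Implicit. Unset Printing Implicit Defensive.
Import Order.TTheory GRing.Theory Num.Theory.
Local Open Scope classical_set_scope.
Local Open Scope ring_scope.

Section real_tree_geometry.
Variables (R : realType) (T : Type) (d : T -> T -> R).
Hypothesis tree : real_tree d.

Lemma dist_ge0 x y : 0 <= d x y. Proof. by case: tree => -[]. Qed.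

Lemma dist_eq0 x y : d x y = 0 -> x = y.
Proof. by case: tree => -[_ + _ _] _ _ => /(_ x y) []. Qed.

Lemma distC x y : d x y = d y x. Proof. by case: tree => -[]. Qed.

Lemma dist_triangle x y z : d x z <= d x y + d y z. Proof. by case: tree => -[]. Qed.

Lemma gromov_four_point w x y z :
  gromov_product d w x z <= gromov_product d w x y \/
  gromov_product d w y z <= gromov_product d w x y.
Proof. by case: tree => _ _ /(_ w x y z); rewrite ge_min => /orP. Qed.

Lemma between_inj x y z z' :
  d x z + d z y = d x y -> d x z' + d z' y = d x y -> d x z = d x z' -> z = z'.
Proof.
move=> hz hz' hzz'; apply: dist_eq0; have := dist_ge0 z z'.
by have := gromov_four_point x z z' y; rewrite /gromov_product; lra.
Qed.

Lemma geodesic_distl x y g t : geodesic d x y g -> 0 <= t <= d x y ->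
  d x (g t) = t.
Proof.
case=> g0 _ gi /[dup] ht /andP[t0 _].
by rewrite -{1}g0 gi ?dist_ge0 ?lexx // sub0r normrN ger0_norm.
Qed.

Lemma geodesic_distr x y g t : geodesic d x y g -> 0 <= t <= d x y ->
  d (g t) y = d x y - t.
Proof.
case=> _ gL gi /[dup] ht /andP[_ tL].
by rewrite -{1}gL gi ?dist_ge0 ?lexx // distrC ger0_norm // subr_ge0.
Qed.

Lemma geodesic_exists x y : exists g, geodesic d x y g.
Proof. by case: tree => _ /(_ x y). Qed.

Definition geod x y : R -> T := projT1 (cid (geodesic_exists x y)).

Lemma geodP x y : geodesic d x y (geod x y).
Proof. by rewrite /geod; case: cid. Qed.

Lemma dist_geod x y s t : 0 <= s <= d x y -> 0 <= t <= d x y ->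
  d (geod x y s) (geod x y t) = `|s - t|.
Proof. by case: (geodP x y) => _ _; apply. Qed.

Lemma between_dist x y z : d x z + d z y = d x y -> 0 <= d x z <= d x y.
Proof. by rewrite dist_ge0 /=; have := dist_ge0 z y; lra. Qed.

Lemma between_geod x y z : d x z + d z y = d x y -> geod x y (d x z) = z.
Proof.
move=> /[dup] hz /between_dist ht.
apply: (@between_inj x y) => //; rewrite (geodesic_distl (geodP x y) ht) //.
by rewrite (geodesic_distr (geodP x y) ht); lra.
Qed.

Lemma segmentP x y z : segment d x y z <-> d x z + d z y = d x y.
Proof.
split=> [[g [hg [t [ht <-]]]]|hz].
  by rewrite (geodesic_distl hg ht) (geodesic_distr hg ht); lra.
exists (geod x y); split; first exact: geodP.
by exists (d x z); split; [exact: between_dist | exact: between_geod].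
Qed.

Lemma segment_geod x y z : segment d x y z ->
  0 <= d x z <= d x y /\ geod x y (d x z) = z.
Proof.
by move=> /segmentP hz; split; [exact: between_dist | exact: between_geod].
Qed.

Lemma geod_segment x y t : 0 <= t <= d x y -> segment d x y (geod x y t).
Proof. by move=> ht; exists (geod x y); split; [exact: geodP | exists t]. Qed.

Lemma geod_inj x y s t : 0 <= s <= d x y -> 0 <= t <= d x y ->
  geod x y s = geod x y t -> s = t.
Proof.
move=> hs ht e.
by rewrite -(geodesic_distl (geodP x y) hs) -(geodesic_distl (geodP x y) ht) e.
Qed.

Lemma seg_coordE x y S :
  seg_coord d x y S = [set t | 0 <= t <= d x y /\ S (geod x y t)].
Proof.
apply/seteqP; split=> t /=.
  by case=> z [/segment_geod[ht gz] [Sz <-]]; rewrite gz.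
case=> ht St; exists (geod x y t); split; first exact: geod_segment.
by rewrite (geodesic_distl (geodP x y) ht).
Qed.

Lemma dist_geod_le_gromov x y w t : 0 <= t <= d x y ->
  t <= gromov_product d x w y -> d w (geod x y t) = d x w - t.
Proof.
move=> ht htp; have := geodesic_distl (geodP x y) ht.
have := geodesic_distr (geodP x y) ht; set z := geod x y t => dzy dxz.
have := dist_triangle x z w; have := distC w z; have := distC x z.
by have := gromov_four_point x w z y; move: htp; rewrite /gromov_product; lra.
Qed.

Lemma dist_geod_ge_gromov x y w t : 0 <= t <= d x y ->
  gromov_product d x w y <= t -> d w (geod x y t) = d y w - (d x y - t).
Proof.
move=> ht htp; have := geodesic_distl (geodP x y) ht.
have := geodesic_distr (geodP x y) ht; set z := geod x y t => dzy dxz.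
have := dist_triangle y z w; have := distC w z; have := distC z y; have := distC x z.
have := distC x y; have := distC w x; have := distC w y.
by have := gromov_four_point y w z x; move: htp; rewrite /gromov_product; lra.
Qed.

End real_tree_geometry.

Section generated_sigma_algebra_closure.
Variables (T : Type) (G : set (set T)).

Lemma g_sigma_setC A : <<s G >> A -> <<s G >> (~` A).
Proof. by move=> GA; rewrite -setTD; exact: sigma_algebraCD. Qed.

Lemma g_sigma_setU A B : <<s G >> A -> <<s G >> B -> <<s G >> (A `|` B).
Proof.
move=> GA GB; rewrite -bigcup2E; apply: sigma_algebra_bigcup => -[|[|i]] //=.
exact: sigma_algebra0.
Qed.

Lemma g_sigma_setD A B : <<s G >> A -> <<s G >> B -> <<s G >> (A `\` B).
Proof.
move=> GA GB; rewrite setDE -[A]setCK -setCU.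
by apply: g_sigma_setC; apply: g_sigma_setU => //; exact: g_sigma_setC.
Qed.

Lemma g_sigma_bigcapT (F : (set T)^nat) :
  (forall n, <<s G >> (F n)) -> <<s G >> (\bigcap_n F n).
Proof.
move=> GF; rewrite -[X in <<s G >> X]setCK setC_bigcap; apply: g_sigma_setC.
by apply: sigma_algebra_bigcup => n; exact: g_sigma_setC.
Qed.

Lemma g_sigma_bigcup_countable (I : Type) (D : set I) (F : I -> set T) :
  countable D -> (forall i, D i -> <<s G >> (F i)) ->
  <<s G >> (\bigcup_(i in D) F i).
Proof.
move=> cD GF; have [->|/set0P[i0 Di0]] := eqVneq D set0.
  by rewrite bigcup_set0; exact: sigma_algebra0.
move: cD => /countable_injP[f injf].
rewrite -(injpinv_image (cst i0) injf) bigcup_image bigcup_mkcond.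
apply: sigma_algebra_bigcup => n; case: ifPn => [|_]; last exact: sigma_algebra0.
by rewrite inE => -[i Di <-]; rewrite pinvKV ?inE //; exact: GF.
Qed.

End generated_sigma_algebra_closure.

Section lebesgue_measure_facts.
Variable R : realType.
Local Notation mu := (@lebesgue_measure R).

Lemma measurable_lebesgue_measurable (A : set R) :
  measurable A -> lebesgue_measurable A.
Proof. exact: sub_caratheodory. Qed.

Lemma lebesgue_measurable_decomp (E : set R) : lebesgue_measurable E ->
  exists B N N', [/\ E = B `|` N, measurable B, measurable N',
                     mu N' = 0%E & N `<=` N'].
Proof.
rewrite /lebesgue_measurable -completed_caratheodory_measurable.
rewrite g_sigma_completed_algebra_genE => -[B mB [N [N' [mN' N0 NN']]] <-].
by exists B, N, N'.
Qed.

Lemma measurable_fun_shift (c : R) :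
  measurable_fun [set: measurableTypeR R] (fun t => t + c).
Proof. by apply: measurable_funD => //; exact: measurable_cst. Qed.

Lemma measurable_fun_reflect (c : R) :
  measurable_fun [set: measurableTypeR R] (fun t => c - t).
Proof. by apply: measurable_funB => //; exact: measurable_cst. Qed.

Lemma lebesgue_measure_shift (c : R) (A : set R) : measurable A ->
  mu ((fun t => t + c) @^-1` A) = mu A.
Proof.
move=> mA.
rewrite -[LHS]/(pushforward mu ((fun t => t + c) : R -> measurableTypeR R) A).
apply/esym/lebesgue_measure_unique => //= [|_ _ [[a b] _ <-]].
  exact: measurable_fun_shift.
rewrite /pushforward.
have -> : (fun t => t + c) @^-1` `]a, b]%classic = `]a - c, b - c]%classic.
  apply/seteqP; split=> t /=; rewrite !in_itv /=;
    by move=> /andP[? ?]; apply/andP; split; lra.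
rewrite !lebesgue_measure_itv /= !lte_fin ltrD2r.
by case: ltP => //; rewrite -!EFinB opprB addrA subrK.
Qed.

Lemma lebesgue_measure_reflect (c : R) (A : set R) : measurable A ->
  mu ((fun t => c - t) @^-1` A) = mu A.
Proof.
move=> mA; have -> : (fun t => c - t) @^-1` A =
    (-%R : R -> R) @^-1` ((fun t => t + c) @^-1` A).
  by apply/seteqP; split=> t /=; rewrite addrC.
rewrite -[LHS]/(pushforward mu (-%R : R -> measurableTypeR R) _) lebesgue_measureN.
  exact: lebesgue_measure_shift.
by rewrite -[X in measurable X]setTI; exact: measurable_fun_shift.
Qed.

End lebesgue_measure_facts.

Lemma exists_grid_point (R : archiFieldType) (t r : R) : 0 <= t -> 0 < r ->
  exists k : nat, k%:R * r <= t < k%:R * r + r.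
Proof.
move=> t0 r0; exists (Num.truncn (t / r)).
have /andP[lo hi] := truncn_itv (divr_ge0 t0 (ltW r0)).
by rewrite -ler_pdivlMr // lo /= -[X in _ < _ + X]mul1r -mulrDl -ltr_pdivrMr // natr1.
Qed.

Section real_tree_sigma_algebras.
Variables (R : realType) (T : Type) (d : T -> T -> R).
Hypothesis tree : real_tree d.
Local Notation geod := (geod tree).

Lemma segment_closed x y z :
  (forall e, 0 < e -> exists2 w, segment d x y w & d w z < e) ->
  segment d x y z.
Proof.
move=> near; apply/(segmentP tree)/eqP; rewrite eq_le (dist_triangle tree) andbT.
apply/ler_addgt0Pr => e e0; have e20 : 0 < e / 2 by rewrite divr_gt0.
have [w /(segmentP tree) hw dwz] := near _ e20.
have := dist_triangle tree x w z; have := dist_triangle tree z w y.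
by have := distC tree z w; lra.
Qed.

Lemma segment_bigcap_balls x y : segment d x y =
  \bigcap_n \bigcup_k
    open_ball d (geod x y (Num.min (k%:R * n.+1%:R^-1) (d x y))) n.+1%:R^-1.
Proof.
apply/seteqP; split=> z.
  move=> /(segment_geod tree) [/andP[t0 tL] gz] n _.
  have [|k /andP[kt tk]] := exists_grid_point t0 (_ : 0 < n.+1%:R^-1).
    by rewrite invr_gt0.
  have kr0 : 0 <= k%:R * n.+1%:R^-1 :> R by rewrite mulr_ge0 // invr_ge0.
  exists k => //; rewrite /open_ball /= -gz (min_idPl (le_trans kt tL)).
  rewrite dist_geod ?kr0 ?t0 ?(le_trans kt tL) //.
  by rewrite distrC ger0_norm ?subr_ge0 // ltrBlDl.
move=> hz; apply: segment_closed => e e0.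
have [n] := ltr_add_invr e0; rewrite add0r => ne.
have [k _] := hz n I; set t := Num.min _ _ => dz.
exists (geod x y t); last exact: lt_trans ne.
apply: geod_segment; rewrite le_min ge_min lexx orbT (dist_ge0 tree) !andbT.
by rewrite mulr_ge0 // invr_ge0.
Qed.

Lemma sigmaB0_segment x y : sigmaB0 d (segment d x y).
Proof.
rewrite segment_bigcap_balls; apply: g_sigma_bigcapT => n.
apply: sigma_algebra_bigcup => k; apply: sub_sigma_algebra.
by exists (geod x y (Num.min (k%:R * n.+1%:R^-1) (d x y))), n.+1%:R^-1.
Qed.

Lemma sigma_algebra_sigmaG : sigma_algebra setT (sigmaG d).
Proof.
split=> [x y|A GA x y|F GF x y].
- rewrite (_ : seg_coord d x y set0 = set0); first exact: measurable0.
  by apply/seteqP; split=> t // [z [_ []]].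
- rewrite (_ : seg_coord d x y (setT `\` A) =
      `[0, d x y]%classic `\` seg_coord d x y A).
    apply: measurableD (GA x y).
    by apply: measurable_lebesgue_measurable; exact: measurable_itv.
  rewrite !(seg_coordE tree); apply/seteqP; split=> t /=; rewrite in_itv /=.
    by move=> [ht [_ nA]]; split=> // -[].
  by move=> [ht nA]; split=> //; split=> // Ag; apply: nA.
- rewrite (_ : seg_coord d x y (\bigcup_k F k) =
      \bigcup_k seg_coord d x y (F k)).
    by apply: bigcupT_measurable => k; exact: GF.
  apply/seteqP; split=> t.
    by move=> [z [sz [[k _ Fz] <-]]]; exists k => //; exists z.
  by move=> [k _ [z [sz [Fz <-]]]]; exists z; split=> //; split=> //; exists k.
Qed.

Lemma sigmaG_open_ball w r : sigmaG d (open_ball d w r).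
Proof.
move=> x y; rewrite (seg_coordE tree).
set L := d x y; set p := gromov_product d x w y.
rewrite (_ : [set t | _] = `[0, L]%classic `&`
    ((`]-oo, p]%classic `&` `]d x w - r, +oo[%classic) `|`
     (`[p, +oo[%classic `&` `]-oo, r + L - d y w[%classic))).
  apply: measurable_lebesgue_measurable; apply: measurableI => //.
  by apply: measurableU; apply: measurableI.
apply/seteqP; split=> t /=; rewrite !in_itv /= ?andbT; rewrite /open_ball /=.
  move=> [ht hb]; split=> //; have [tp|pt] := lerP t p.
    by left; move: hb; rewrite (dist_geod_le_gromov tree ht tp); lra.
  by right; move: hb; rewrite (dist_geod_ge_gromov tree ht (ltW pt)) -/L; lra.
move=> [ht [[tp hb]|[pt hb]]]; split=> //.
  by rewrite (dist_geod_le_gromov tree ht tp); lra.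
by rewrite (dist_geod_ge_gromov tree ht pt) -/L; lra.
Qed.

Lemma sigmaS_sub_sigmaB0 : sigmaS d `<=` sigmaB0 d.
Proof.
apply: smallest_sub; first exact: smallest_sigma_algebra.
by move=> _ [x _ [y _ <-]]; exact: sigmaB0_segment.
Qed.

Lemma sigmaB0_sub_sigmaG : sigmaB0 d `<=` sigmaG d.
Proof.
apply: smallest_sub; first exact: sigma_algebra_sigmaG.
by move=> _ [w [r [_ ->]]]; exact: sigmaG_open_ball.
Qed.

Lemma sigmaS_sub_sigmaG : sigmaS d `<=` sigmaG d.
Proof. exact: subset_trans sigmaS_sub_sigmaB0 sigmaB0_sub_sigmaG. Qed.

Lemma seg_leb_le_length_measure x y M : (seg_leb d x y M <= length_measure d M)%E.
Proof.
apply: ereal_sup_ubound; exists 1%N, (fun=> x), (fun=> y); split.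
  by move=> i j /andP[ij]; rewrite ltnS leqn0 => /eqP j0; rewrite j0 in ij.
by rewrite big_ord1.
Qed.

Lemma sigmaS_completion_sub_sigmaG : sigmaS_completion d `<=` sigmaG d.
Proof.
apply: smallest_sub; first exact: sigma_algebra_sigmaG.
move=> A [SA|[M [SM [M0 AM]]]]; first exact: sigmaS_sub_sigmaG.
move=> x y; apply: negligible_sub_caratheodory; exists (seg_coord d x y M); split.
- exact: sigmaS_sub_sigmaG.
- by apply/eqP; rewrite eq_le measure_ge0 andbT -M0 seg_leb_le_length_measure.
- by move=> t [z [sz [Az <-]]]; exists z; split=> //; split=> //; exact: AM.
Qed.

End real_tree_sigma_algebras.

Section separable_real_tree.
Variables (R : realType) (T : Type) (d : T -> T -> R).
Hypothesis tree : real_tree d.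
Local Notation geod := (geod tree).

Lemma metric_open_ball w r : metric_open d (open_ball d w r).
Proof.
move=> z; rewrite /open_ball /= => wz; exists (r - d w z); first by lra.
by move=> u /= zu; have := dist_triangle tree w z u; lra.
Qed.

Lemma sigmaB0_sub_sigmaB : sigmaB0 d `<=` sigmaB d.
Proof.
apply: smallest_sub; first exact: smallest_sigma_algebra.
by move=> _ [w [r [_ ->]]]; apply: sub_sigma_algebra; exact: metric_open_ball.
Qed.

Lemma separable_sigmaB_sub_sigmaB0 : separable d -> sigmaB d `<=` sigmaB0 d.
Proof.
move=> [D [cD dense]]; apply: smallest_sub; first exact: smallest_sigma_algebra.
move=> A oA; pose r (n : nat) : R := n.+1%:R^-1.
have r0 n : 0 < r n by rewrite invr_gt0.
pose P := [set p : T * nat | D p.1 /\ open_ball d p.1 (r p.2) `<=` A].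
have -> : A = \bigcup_(p in P) open_ball d p.1 (r p.2).
  apply/seteqP; split=> [z Az|z [p [_ pA] /pA //]].
  have [e e0 eA] := oA z Az; have [n] := ltr_add_invr (divr_gt0 e0 (ltr0n R 2)).
  rewrite add0r -/(r n) => ne; have [y Dy zy] := dense z (r n) (r0 n).
  exists (y, n); last by rewrite /open_ball /= (distC tree).
  split=> // u; rewrite /open_ball /= => yu; apply: eA.
  by have := dist_triangle tree z y u; rewrite /open_ball /=; lra.
apply: g_sigma_bigcup_countable.
  apply: (sub_countable (subset_card_le (_ : P `<=` D `*` setT))) => [p []//|].
  exact: countableX.
by move=> [y n] _; apply: sub_sigma_algebra; exists y, (r n).
Qed.

(* The point x0 is needed: on an empty type the supremum defining
   length_measure is -oo, not 0. *)
Lemma length_measure_eq0 (x0 : T) M :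
  (forall a b, seg_leb d a b M = 0%E) -> length_measure d M = 0%E.
Proof.
move=> M0; apply/eqP; rewrite eq_le; apply/andP; split.
  by apply: ub_ereal_sup => _ [n [a [b [_ ->]]]]; rewrite big1.
apply: ereal_sup_ubound; exists 0%N, (fun=> x0), (fun=> x0).
by rewrite big_ord0; split=> // i j /andP[_]; rewrite ltn0.
Qed.

Definition seg_image x y (X : set R) : set T :=
  geod x y @` (X `&` [set t | 0 <= t <= d x y]).

Lemma seg_imageD x y X Y :
  seg_image x y (X `\` Y) = seg_image x y X `\` seg_image x y Y.
Proof.
apply/seteqP; split=> z.
  move=> [t [[Xt nYt] ht] <-]; split; first by exists t.
  by move=> [s [Ys hs] /(geod_inj hs ht) st]; apply: nYt; rewrite -st.
move=> [[t [Xt ht] <-] nY]; exists t => //; split=> //; split=> // Yt.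
by apply: nY; exists t.
Qed.

Lemma seg_imageT x y : seg_image x y setT = segment d x y.
Proof.
apply/seteqP; split=> z; first by move=> [t [_ ht] <-]; exact: geod_segment.
by move=> /(segment_geod tree) [ht <-]; exists (d x z).
Qed.

Lemma sigmaS_seg_image_ray x y r : sigmaS d (seg_image x y [set t | t <= r]).
Proof.
have [r0|r0] := ltP r 0.
  rewrite (_ : seg_image x y _ = set0); first exact: sigma_algebra0.
  by apply/seteqP; split=> z // [t [/= tr /andP[t0 _]] _]; lra.
pose s := Num.min r (d x y).
have hs : 0 <= s <= d x y by rewrite le_min r0 (dist_ge0 tree) ge_min lexx orbT.
rewrite (_ : seg_image x y _ = segment d x (geod x y s)).
  by apply: sub_sigma_algebra; exists x => //; exists (geod x y s).
have xs := geodesic_distl tree (geodP tree x y) hs.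
apply/seteqP; split=> z.
  move=> [t [/= tr ht] <-]; apply/(segmentP tree).
  have ts : t <= s by rewrite le_min tr; case/andP: ht.
  rewrite xs (geodesic_distl tree (geodP tree x y) ht) dist_geod //.
  by rewrite distrC ger0_norm; lra.
move=> /(segmentP tree); rewrite xs => hz.
have sy := geodesic_distr tree (geodP tree x y) hs.
have := dist_triangle tree z (geod x y s) y; have := dist_ge0 tree z (geod x y s).
move=> h0 hzs; have /(segment_geod tree) [ht gz] : segment d x y z.
  apply/(segmentP tree)/eqP; rewrite eq_le (dist_triangle tree) andbT; lra.
exists (d x z) => //; split=> //=.
have : d x z <= s by lra.
by rewrite le_min => /andP[].
Qed.

Lemma sigma_algebra_seg_image x y :
  sigma_algebra setT [set X | sigmaS d (seg_image x y X)].
Proof.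
split=> /=.
- by rewrite /seg_image set0I image_set0; exact: sigma_algebra0.
- move=> X SX; rewrite seg_imageD seg_imageT; apply: g_sigma_setD => //.
  by apply: sub_sigma_algebra; exists x => //; exists y.
- move=> F SF; rewrite /seg_image setI_bigcupl image_bigcup.
  exact: sigma_algebra_bigcup.
Qed.

Lemma sigmaS_seg_image x y (X : set R) : measurable X -> sigmaS d (seg_image x y X).
Proof.
move=> mX; apply: (smallest_sub (sigma_algebra_seg_image x y) _ mX).
move=> _ [[a b] _ <-] /=.
rewrite (_ : `]a, b]%classic = [set t | t <= b] `\` [set t | t <= a]).
  by rewrite seg_imageD; apply: g_sigma_setD; exact: sigmaS_seg_image_ray.
apply/seteqP; split=> t /=; rewrite in_itv /=; first by move=> /andP[? ?]; lra.
by move=> [? ?]; apply/andP; lra.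
Qed.

Lemma seg_leb_eq0 a b M (N : set R) : sigmaG d M -> measurable N ->
  lebesgue_measure N = 0%E -> seg_coord d a b M `<=` N -> seg_leb d a b M = 0%E.
Proof.
move=> GM mN N0 MN; apply: (subset_measure0 (GM a b) _ MN) => //.
exact: measurable_lebesgue_measurable.
Qed.

Lemma length_measure_seg_image_null x y (N : set R) :
  measurable N -> lebesgue_measure N = 0%E ->
  length_measure d (seg_image x y N) = 0%E.
Proof.
move=> mN N0; apply: (length_measure_eq0 x) => a b.
pose N1 := (fun s => d x a - s) @^-1` N.
pose N2 := (fun s => s + (d x y - d y a)) @^-1` N.
have mN1 : measurable N1.
  by rewrite -[X in measurable X]setTI; exact: measurable_fun_reflect.
have mN2 : measurable N2.
  by rewrite -[X in measurable X]setTI; exact: measurable_fun_shift.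
have coordN : seg_coord d a b (seg_image x y N) `<=` N1 `|` N2.
  move=> _ [z [_ [[t [Nt ht] <-] <-]]]; have [tp|pt] := lerP t (gromov_product d x a y).
    by left; rewrite /N1 /= (dist_geod_le_gromov tree ht tp) (_ : _ - _ = t) //; lra.
  right; rewrite /N2 /= (dist_geod_ge_gromov tree ht (ltW pt)) (_ : _ + _ = t) //.
  by rewrite (distC tree y a); lra.
apply: seg_leb_eq0 coordN.
- by apply: (sigmaS_sub_sigmaG tree); exact: sigmaS_seg_image.
- exact: measurableU.
- by apply: null_set_setU => //; rewrite -N0;
    [exact: lebesgue_measure_reflect | exact: lebesgue_measure_shift].
Qed.

Lemma sigmaS_completion_setI_segment x y A :
  sigmaG d A -> sigmaS_completion d (A `&` segment d x y).
Proof.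
move=> /(_ x y) /lebesgue_measurable_decomp [B [N [N' [AxyE mB mN' N'0 NN']]]].
have -> : A `&` segment d x y = seg_image x y B `|` seg_image x y N.
  rewrite /seg_image -image_setU -setIUl -AxyE (seg_coordE tree).
  apply/seteqP; split=> z.
    by move=> [Az /(segment_geod tree) [ht gz]]; exists (d x z); rewrite /= gz.
  by move=> [t [[ht At] _] <-]; split=> //; exact: geod_segment.
apply: g_sigma_setU; apply: sub_sigma_algebra; first by left; exact: sigmaS_seg_image.
right; exists (seg_image x y N'); split; first exact: sigmaS_seg_image.
split; first exact: length_measure_seg_image_null.
by apply: image_subset; apply: setSI.
Qed.

Section leaves.
Variables (x0 : T) (D : set T).
Hypothesis dense : forall x e, 0 < e -> exists2 y, D y & d x y < e.

(* The hypothesis says that z lies on [x0,a]; then z also lies on [x0,y]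
   for every y closer to a than z is. *)
Lemma between_x0_dense z a : 0 < d z a -> gromov_product d z a x0 <= 0 ->
  exists2 y, D y & segment d x0 y z.
Proof.
move=> za az0; have [y Dy ay] := dense a za; exists y => //.
apply/(segmentP tree)/eqP; rewrite eq_le (dist_triangle tree) andbT.
have := gromov_four_point tree z x0 a y; move: az0; rewrite /gromov_product.
have := dist_triangle tree z y a; have := distC tree z x0.
have := distC tree x0 a; have := distC tree a y; lra.
Qed.

Lemma not_in_segments_endpoint z a b :
  (forall y, D y -> ~ segment d x0 y z) -> segment d a b z ->
  d a z = 0 \/ d a z = d a b.
Proof.
move=> nseg /(segmentP tree) abz.
have [az0|az0] := eqVneq (d a z) 0; first by left.
have [azb|azb] := eqVneq (d a z) (d a b); first by right.
have za : 0 < d z a by rewrite (distC tree) lt_def az0 dist_ge0.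
have zb : 0 < d z b by rewrite lt_def dist_ge0 // andbT; apply: contra_neq azb; lra.
have abz0 : gromov_product d z a b = 0.
  by rewrite /gromov_product (distC tree z a); lra.
exfalso; have [h|h] := gromov_four_point tree z a b x0; rewrite abz0 in h.
  by have [y Dy] := between_x0_dense za h; exact: nseg.
by have [y Dy] := between_x0_dense zb h; exact: nseg.
Qed.

Let U := \bigcup_(y in D) segment d x0 y.

Lemma length_measure_outside_segments :
  sigmaS d (~` U) -> length_measure d (~` U) = 0%E.
Proof.
move=> SU; apply: (length_measure_eq0 x0) => a b.
have coordU : seg_coord d a b (~` U) `<=` [set 0] `|` [set d a b].
  move=> _ [z [abz [nUz <-]]].
  have nseg y : D y -> ~ segment d x0 y z by move=> Dy yz; apply: nUz; exists y.
  by case: (not_in_segments_endpoint nseg abz) => ->; [left | right].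
have m0 := measurable_set1 (0 : R); have mab := measurable_set1 (d a b).
apply: seg_leb_eq0 coordU; first exact: (sigmaS_sub_sigmaG tree).
  exact: measurableU.
by apply: null_set_setU => //; exact: lebesgue_measure_set1.
Qed.

End leaves.

Lemma separable_sigmaG_sub_sigmaS_completion :
  separable d -> sigmaG d `<=` sigmaS_completion d.
Proof.
move=> [D [cD dense]] A GA.
have [->|/set0P[x0 _]] := eqVneq A set0; first exact: sigma_algebra0.
pose U := \bigcup_(y in D) segment d x0 y.
have SU : sigmaS d U.
  apply: g_sigma_bigcup_countable cD _ => y _.
  by apply: sub_sigma_algebra; exists x0 => //; exists y.
have -> : A = (A `&` ~` U) `|` \bigcup_(y in D) (A `&` segment d x0 y).
  by rewrite -setI_bigcupr -setIUr setvU setIT.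
apply: g_sigma_setU; last first.
  by apply: g_sigma_bigcup_countable cD _ => y _; exact: sigmaS_completion_setI_segment.
apply: sub_sigma_algebra; right; exists (~` U); split; first exact: g_sigma_setC.
split; last exact: subIsetr.
by apply: (length_measure_outside_segments dense); exact: g_sigma_setC.
Qed.

End separable_real_tree.

Theorem proposition4 (R : realType) (T : Type) (d : T -> T -> R) :
  real_tree d ->
  ((sigmaS d `<=` sigmaB0 d /\ sigmaB0 d `<=` sigmaG d)
    /\ sigmaS_completion d `<=` sigmaG d)
  /\ (separable d -> sigmaB0 d = sigmaB d /\ sigmaS_completion d = sigmaG d).
Proof.
move=> tree; split.
  split; first by split; [exact: sigmaS_sub_sigmaB0 | exact: sigmaB0_sub_sigmaG].
  exact: sigmaS_completion_sub_sigmaG.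
move=> sep; split; apply/seteqP; split.
- exact: sigmaB0_sub_sigmaB.
- exact: separable_sigmaB_sub_sigmaB0.
- exact: sigmaS_completion_sub_sigmaG.
- exact: separable_sigmaG_sub_sigmaS_completion.
Qed.
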